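(* Let $a,b>0$ and let $H=\frac12 f(p^2-a^2x^2,q^2-b^2y^2)$ on $\mathbb{R}^4$ (coordinates $(x,y,p,q)$), where $f$ is smooth with $f(0,0)=0$, $f_u(0,0)=f_v(0,0)=1$. Let $\mathbf v_1=(1,0,a,0)$, $\mathbf v_2=(0,1,0,-b)$, $\mathbf v_3=(1,0,-a,0)$, $\mathbf v_4=(0,1,0,b)$, and let $\phi_\pm:\mathbb{R}\to\mathbb{R}$ be $C^k$ ($k\ge1$) functions vanishing to order $l\le k$ at $0$. Then there are unique functions $\psi_\pm$ defined near $0$ such that the curves $\gamma_\pm(s)=s\mathbf v_1\pm s\mathbf v_2+\phi_\pm(s)\mathbf v_3+\psi_\pm(s)\mathbf v_4$ satisfy $H(\gamma_\pm(s))\equiv0$. Moreover $\psi_\pm$ are $C^k$ and vanish to order $l$ at $0$. In the case $H=\frac12(p^2+q^2-a^2x^2-b^2y^2)$, $\psi_\pm=\mp\frac{a^2}{b^2}\phi_\pm$.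
   Context: A function $\phi$ vanishes to order $l$ at $0$ ($l$ real) if $\phi(s)=\bar\phi(s)s^l$ with $\bar\phi$ $C^k$ on $\mathbb{R}\setminus\{0\}$ and $\frac{d^j}{ds^j}\bar\phi$ bounded on $[-1,1]\setminus\{0\}$ for $0\le j\le l$. *)

From Stdlib Require Import Reals Lra.
From Coquelicot Require Import Coquelicot.
Open Scope R_scope.

Record R4 := mk4 { cx : R; cy : R; cp : R; cq : R }.
Definition add4 (u v : R4) : R4 :=
  mk4 (cx u + cx v) (cy u + cy v) (cp u + cp v) (cq u + cq v).
Definition scal4 (c : R) (u : R4) : R4 :=
  mk4 (c * cx u) (c * cy u) (c * cp u) (c * cq u).

Definition v1 (a b : R) : R4 := mk4 1 0 a 0.
Definition v2 (a b : R) : R4 := mk4 0 1 0 (- b).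
Definition v3 (a b : R) : R4 := mk4 1 0 (- a) 0.
Definition v4 (a b : R) : R4 := mk4 0 1 0 b.

Definition H (a b : R) (f : R -> R -> R) (z : R4) : R :=
  / 2 * f (cp z ^ 2 - a ^ 2 * cx z ^ 2) (cq z ^ 2 - b ^ 2 * cy z ^ 2).

(* gamma(s) = s v1 + sigma s v2 + phi(s) v3 + psi(s) v4, sigma = +1 or -1 *)
Definition gamma (a b sigma : R) (phi psi : R -> R) (s : R) : R4 :=
  add4 (add4 (scal4 s (v1 a b)) (scal4 (sigma * s) (v2 a b)))
       (add4 (scal4 (phi s) (v3 a b)) (scal4 (psi s) (v4 a b))).

Fixpoint C2n (n : nat) (f : R -> R -> R) : Prop :=
  match n with
  | O => forall x y, continuity_2d_pt f x y
  | S m =>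
      (forall x y, ex_derive (fun t => f t y) x /\ ex_derive (fun t => f x t) y)
      /\ C2n m (fun x y => Derive (fun t => f t y) x)
      /\ C2n m (fun x y => Derive (fun t => f x t) y)
  end.

Definition smooth2 (f : R -> R -> R) : Prop := forall n, C2n n f.

Definition Ck_on (k : nat) (U : R -> Prop) (g : R -> R) : Prop :=
  forall x, U x ->
    (forall j, (j <= k)%nat -> ex_derive_n g j x) /\ continuous (Derive_n g k) x.

(* The paper's definition: phi vanishes to order l at 0 (k from context).
   s^l is read as |s|^l. *)
Definition vanishes_to_order (k : nat) (l : R) (phi : R -> R) : Prop :=
  exists phib : R -> R,
    Ck_on k (fun s => s <> 0) phib /\
    (forall s, s <> 0 -> phi s = phib s * Rpower (Rabs s) l) /\
    (forall j : nat, INR j <= l ->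
       exists M, forall s, -1 <= s <= 1 -> s <> 0 -> Rabs (Derive_n phib j s) <= M).

Definition vanishes_to_order_near (k : nat) (l delta : R) (psi : R -> R) : Prop :=
  exists psib : R -> R,
    Ck_on k (fun s => 0 < Rabs s < delta) psib /\
    (forall s, 0 < Rabs s < delta -> psi s = psib s * Rpower (Rabs s) l) /\
    (forall j : nat, INR j <= l ->
       exists M, forall s, 0 < Rabs s < delta -> Rabs s <= 1 ->
         Rabs (Derive_n psib j s) <= M).

From Stdlib Require Import Reals Lra Lia ClassicalEpsilon FunctionalExtensionality.
From Coquelicot Require Import Coquelicot.
Open Scope R_scope.

(* Along [gamma], [p^2 - a^2 x^2 = -4 a^2 s phi(s) =: U(s)] and
   [q^2 - b^2 y^2 = -4 b^2 sigma s psi(s) =: V(s)], so [H(gamma(s)) = f(U(s), V(s)) / 2].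
   Since [f_v(0,0) = 1], the implicit function theorem solves [f(U, V) = 0] near [0] as
   [V = g(U)] with [g] smooth and [g(0) = 0], and Hadamard's lemma writes
   [g(U) = U M(U)] with [M(U) = int_0^1 g'(tU) dt] smooth.  Dividing [V(s) = g(U(s))] by
   [-4 b^2 sigma s] gives [psi = a^2 / (b^2 sigma) * phi * M o U]: [psi] is [phi] times a
   [C^k] function whose derivatives are bounded near [0], hence [C^k] and vanishing to the
   same order as [phi] (Leibniz rule).  A continuous competitor [psi'] has [V'(s) -> 0], so
   local uniqueness in the implicit function theorem forces [psi' = psi] for [s <> 0], and
   continuity at [s = 0].  For [f(u, v) = u + v], [g(U) = -U] and [M = -1]. *)

Definition bounded_on (J : R -> Prop) (h : R -> R) : Prop :=
  exists M, forall x, J x -> Rabs (h x) <= M.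

Lemma bounded_on_empty I h : bounded_on (fun x => I x /\ False) h.
Proof. exists 0. intros x [_ []]. Qed.

Lemma bounded_on_sub J J' h : (forall x, J' x -> J x) -> bounded_on J h -> bounded_on J' h.
Proof. intros HJ [M HM]. exists M. auto. Qed.

Lemma bounded_on_ext J h1 h2 :
  (forall x, J x -> h1 x = h2 x) -> bounded_on J h1 -> bounded_on J h2.
Proof. intros E [M HM]. exists M. intros x Hx. rewrite <- E by auto. auto. Qed.

Lemma bounded_on_const J c : bounded_on J (fun _ => c).
Proof. exists (Rabs c). intros; lra. Qed.

Lemma bounded_on_plus J h1 h2 :
  bounded_on J h1 -> bounded_on J h2 -> bounded_on J (fun x => h1 x + h2 x).
Proof.
  intros [M1 H1] [M2 H2]. exists (M1 + M2). intros x Hx.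
  pose proof (Rabs_triang (h1 x) (h2 x)). specialize (H1 x Hx). specialize (H2 x Hx). lra.
Qed.

Lemma bounded_on_mult J h1 h2 :
  bounded_on J h1 -> bounded_on J h2 -> bounded_on J (fun x => h1 x * h2 x).
Proof.
  intros [M1 H1] [M2 H2]. exists (M1 * M2). intros x Hx. rewrite Rabs_mult.
  specialize (H1 x Hx). specialize (H2 x Hx).
  apply Rmult_le_compat; auto using Rabs_pos.
Qed.

(* Recursive in [Derive h], so that closure under products is a plain induction. *)
Fixpoint Cn_bdd (n : nat) (I J : R -> Prop) (h : R -> R) : Prop :=
  match n with
  | O => (forall x, I x -> continuous h x) /\ bounded_on (fun x => I x /\ J x) h
  | S m => (forall x, I x -> ex_derive h x) /\ bounded_on (fun x => I x /\ J x) h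
           /\ Cn_bdd m I J (Derive h)
  end.

Notation Cn n I := (Cn_bdd n I (fun _ => False)).

Lemma Cn_bdd_continuous n I J h x : Cn_bdd n I J h -> I x -> continuous h x.
Proof.
  destruct n as [|n]; intros Hh Hx.
  - exact (proj1 Hh x Hx).
  - exact (ex_derive_continuous h x (proj1 Hh x Hx)).
Qed.

Lemma Cn_bdd_bounded n I J h : Cn_bdd n I J h -> bounded_on (fun x => I x /\ J x) h.
Proof. destruct n; simpl; tauto. Qed.

Lemma Cn_bdd_pred n I J h : Cn_bdd (S n) I J h -> Cn_bdd n I J h.
Proof.
  revert h; induction n as [|n IH]; intros h [Hd [Hb Hc]].
  - split; [|exact Hb]. intros x Hx. exact (ex_derive_continuous h x (Hd x Hx)).
  - split; [exact Hd|split; [exact Hb|auto]].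
Qed.

Lemma Cn_bdd_le m n I J h : (m <= n)%nat -> Cn_bdd n I J h -> Cn_bdd m I J h.
Proof. induction 1; auto using Cn_bdd_pred. Qed.

Lemma Cn_bdd_sub n I I' J J' h :
  (forall x, I' x -> I x) -> (forall x, I' x -> J' x -> J x) -> Cn_bdd n I J h -> Cn_bdd n I' J' h.
Proof.
  intros HI HJ.
  assert (HIJ : forall x, I' x /\ J' x -> I x /\ J x) by (intros x []; auto).
  revert h; induction n as [|n IH]; intros h Hh.
  - destruct Hh as [Hc Hb]. split; [auto|exact (bounded_on_sub _ _ _ HIJ Hb)].
  - destruct Hh as [Hd [Hb Hc]]. split; [auto|split; [exact (bounded_on_sub _ _ _ HIJ Hb)|auto]].
Qed.

Lemma Derive_n_S_Derive n h : Derive_n h (S n) = Derive_n (Derive h) n.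
Proof.
  apply functional_extensionality. revert h. induction n as [|n IH]; intros h x; [reflexivity|].
  apply Derive_ext. intros; apply IH.
Qed.

Lemma Cn_bdd_iff n I J h : Cn_bdd n I J h <->
  (forall j x, (j < n)%nat -> I x -> ex_derive (Derive_n h j) x) /\
  (forall x, I x -> continuous (Derive_n h n) x) /\
  (forall j, (j <= n)%nat -> bounded_on (fun x => I x /\ J x) (Derive_n h j)).
Proof.
  revert h; induction n as [|n IH]; intros h; cbn [Cn_bdd].
  - split.
    + intros [Hc Hb]. split; [intros; lia|split; [exact Hc|]].
      intros j Hj. replace j with 0%nat by lia. exact Hb.
    + intros [_ [Hc Hb]]. split; [exact Hc|exact (Hb 0%nat (le_n 0))].
  - rewrite IH. split.
    + intros [Hd [Hb [Hd' [Hc Hb']]]]. split; [|split].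
      * intros [|j] x Hj Hx; [auto|]. rewrite Derive_n_S_Derive. apply Hd'; auto; lia.
      * rewrite Derive_n_S_Derive. exact Hc.
      * intros [|j] Hj; [exact Hb|]. rewrite Derive_n_S_Derive. apply Hb'. lia.
    + intros [Hd [Hc Hb]]. split; [|split; [|split; [|split]]].
      * intros x Hx. apply (Hd 0%nat); auto; lia.
      * apply (Hb 0%nat). lia.
      * intros j x Hj Hx. rewrite <- Derive_n_S_Derive. apply Hd; auto; lia.
      * rewrite <- Derive_n_S_Derive. exact Hc.
      * intros j Hj. rewrite <- Derive_n_S_Derive. apply Hb. lia.
Qed.

Lemma Cn_of_Ck_on k I h : Ck_on k I h -> Cn k I h.
Proof.
  intros Hh. apply Cn_bdd_iff. split; [|split].
  - intros j x Hj Hx. exact (proj1 (Hh x Hx) (S j) Hj).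
  - intros x Hx. exact (proj2 (Hh x Hx)).
  - intros j _. exists 0. intros x [_ []].
Qed.

Lemma Ck_on_of_Cn_bdd k I J h : Cn_bdd k I J h -> Ck_on k I h.
Proof.
  intros Hh. apply Cn_bdd_iff in Hh as [Hd [Hc _]]. intros x Hx. split; [|auto].
  intros [|j] Hj; [exact Logic.I|]. apply Hd; auto.
Qed.

Lemma Cn_bdd_of_Cn n I J h :
  Cn n I h -> (forall j, (j <= n)%nat -> bounded_on (fun x => I x /\ J x) (Derive_n h j)) ->
  Cn_bdd n I J h.
Proof. rewrite !Cn_bdd_iff. tauto. Qed.

Lemma Cn_bdd_compact n I a b h :
  (forall x, a <= x <= b -> I x) -> Cn n I h -> Cn_bdd n I (fun x => a <= x <= b) h.
Proof.
  intros Hab. revert h; induction n as [|n IH]; intros h Hh.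
  - split; [exact (proj1 Hh)|].
    destruct (Rle_or_lt a b) as [Hle|Hlt]; [|exists 0; intros x [_ Hx]; lra].
    destruct (continuity_ab_maj (fun x => Rabs (h x)) a b Hle) as [xm [Hxm _]].
    + intros x Hx. apply continuity_pt_filterlim.
      apply continuous_Rabs_comp, (proj1 Hh), Hab, Hx.
    + exists (Rabs (h xm)). intros x [_ Hx]. exact (Hxm x Hx).
  - pose proof (IH h (Cn_bdd_pred _ _ _ _ Hh)) as H0. destruct Hh as [Hd [_ Hc]].
    split; [exact Hd|split; [exact (Cn_bdd_bounded _ _ _ _ H0)|auto]].
Qed.

Section OpenDomain.

Variables I J : R -> Prop.
Hypothesis I_open : open I.

Lemma Cn_bdd_ext n h1 h2 :
  (forall x, I x -> h1 x = h2 x) -> Cn_bdd n I J h1 -> Cn_bdd n I J h2.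
Proof.
  revert h1 h2; induction n as [|n IH]; intros h1 h2 E Hh.
  - destruct Hh as [Hc Hb]. split; [|exact (bounded_on_ext _ _ _ (fun x Hx => E x (proj1 Hx)) Hb)].
    intros x Hx. apply (continuous_ext_loc _ h1 _ (locally_open I _ I_open E x Hx)). auto.
  - destruct Hh as [Hd [Hb Hc]]. split; [|split].
    + intros x Hx. apply (ex_derive_ext_loc h1); [exact (locally_open I _ I_open E x Hx)|auto].
    + exact (bounded_on_ext _ _ _ (fun x Hx => E x (proj1 Hx)) Hb).
    + apply (IH (Derive h1)); auto. intros x Hx.
      apply Derive_ext_loc, (locally_open I _ I_open E x Hx).
Qed.

Lemma Cn_bdd_const n c : Cn_bdd n I J (fun _ => c).
Proof.
  revert c; induction n as [|n IH]; intros c.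
  - split; [intros; apply continuous_const|apply bounded_on_const].
  - split; [intros; apply ex_derive_const|split; [apply bounded_on_const|]].
    apply (Cn_bdd_ext n (fun _ => 0)); [|apply IH]. intros x _. symmetry. apply Derive_const.
Qed.

Lemma Cn_bdd_plus n h1 h2 :
  Cn_bdd n I J h1 -> Cn_bdd n I J h2 -> Cn_bdd n I J (fun x => h1 x + h2 x).
Proof.
  revert h1 h2; induction n as [|n IH]; intros h1 h2 H1 H2.
  - destruct H1 as [C1 B1], H2 as [C2 B2].
    split; [intros x Hx; apply (continuous_plus h1 h2); auto|apply bounded_on_plus; auto].
  - destruct H1 as [D1 [B1 C1]], H2 as [D2 [B2 C2]].
    split; [intros x Hx; apply (ex_derive_plus h1 h2); auto|split; [apply bounded_on_plus; auto|]].
    apply (Cn_bdd_ext n (fun x => Derive h1 x + Derive h2 x)); [|auto].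
    intros x Hx. rewrite Derive_plus; auto.
Qed.

Lemma Cn_bdd_mult n h1 h2 :
  Cn_bdd n I J h1 -> Cn_bdd n I J h2 -> Cn_bdd n I J (fun x => h1 x * h2 x).
Proof.
  revert h1 h2; induction n as [|n IH]; intros h1 h2 H1 H2.
  - destruct H1 as [C1 B1], H2 as [C2 B2].
    split; [intros x Hx; apply (continuous_mult h1 h2); auto|apply bounded_on_mult; auto].
  - pose proof (Cn_bdd_pred _ _ _ _ H1) as H1'. pose proof (Cn_bdd_pred _ _ _ _ H2) as H2'.
    destruct H1 as [D1 [B1 C1]], H2 as [D2 [B2 C2]].
    split; [intros x Hx; apply (ex_derive_mult h1 h2); auto|split; [apply bounded_on_mult; auto|]].
    apply (Cn_bdd_ext n (fun x => Derive h1 x * h2 x + h1 x * Derive h2 x)).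
    + intros x Hx. rewrite Derive_mult; auto.
    + apply Cn_bdd_plus; auto.
Qed.

Lemma Cn_bdd_scal n c h : Cn_bdd n I J h -> Cn_bdd n I J (fun x => c * h x).
Proof. intros Hh. apply Cn_bdd_mult; [apply Cn_bdd_const|exact Hh]. Qed.

End OpenDomain.

Section OpenDomainUnbounded.

Variable I : R -> Prop.
Hypothesis I_open : open I.

Lemma Cn_id n : Cn n I (fun x => x).
Proof.
  destruct n as [|n].
  - split; [intros; apply continuous_id|apply bounded_on_empty].
  - split; [intros; apply ex_derive_id|split; [apply bounded_on_empty|]].
    apply (Cn_bdd_ext I _ I_open n (fun _ => 1)); [|apply Cn_bdd_const; auto].
    intros x _. symmetry. apply Derive_id.
Qed.

Lemma Cn_inv n h : Cn n I h -> (forall x, I x -> h x <> 0) -> Cn n I (fun x => / h x).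
Proof.
  revert h; induction n as [|n IH]; intros h Hh Hn0.
  - split; [|apply bounded_on_empty]. intros x Hx.
    apply continuity_pt_filterlim, continuity_pt_inv; auto.
    apply continuity_pt_filterlim, (proj1 Hh x Hx).
  - pose proof (Cn_bdd_pred _ _ _ _ Hh) as Hh'. destruct Hh as [D [_ C]].
    split; [intros x Hx; apply ex_derive_inv; auto|split; [apply bounded_on_empty|]].
    apply (Cn_bdd_ext I _ I_open n (fun x => (-1 * Derive h x) * (/ h x * / h x))).
    + intros x Hx. rewrite Derive_inv by auto. field. auto.
    + apply Cn_bdd_mult, Cn_bdd_mult; auto using Cn_bdd_scal.
Qed.

Lemma Cn_comp n I0 m u :
  Cn n I0 m -> Cn n I u -> (forall x, I x -> I0 (u x)) -> Cn n I (fun x => m (u x)).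
Proof.
  revert m u; induction n as [|n IH]; intros m u Hm Hu Hmap.
  - split; [|apply bounded_on_empty]. intros x Hx.
    apply (continuous_comp u m); [exact (proj1 Hu x Hx)|exact (proj1 Hm _ (Hmap x Hx))].
  - pose proof (Cn_bdd_pred _ _ _ _ Hm) as Hm'. pose proof (Cn_bdd_pred _ _ _ _ Hu) as Hu'.
    destruct Hm as [Dm [_ Cm]], Hu as [Du [_ Cu]].
    split; [intros x Hx; apply (ex_derive_comp m u); auto|split; [apply bounded_on_empty|]].
    apply (Cn_bdd_ext I _ I_open n (fun x => Derive m (u x) * Derive u x)).
    + intros x Hx. rewrite (Derive_comp m u x); auto. apply Rmult_comm.
    + apply Cn_bdd_mult; auto.
Qed.

End OpenDomainUnbounded.

Definition partial1 (F : R -> R -> R) (x y : R) : R := Derive (fun t => F t y) x.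
Definition partial2 (F : R -> R -> R) (x y : R) : R := Derive (fun t => F x t) y.

Section Smooth2.

Variable F : R -> R -> R.
Hypothesis F_smooth : smooth2 F.

Lemma smooth2_partial1 : smooth2 (partial1 F).
Proof. intros n. exact (proj1 (proj2 (F_smooth (S n)))). Qed.

Lemma smooth2_partial2 : smooth2 (partial2 F).
Proof. intros n. exact (proj2 (proj2 (F_smooth (S n)))). Qed.

Lemma smooth2_continuity x y : continuity_2d_pt F x y.
Proof. exact (F_smooth O x y). Qed.

Lemma smooth2_ex_derive1 x y : ex_derive (fun t => F t y) x.
Proof. exact (proj1 (proj1 (F_smooth 1%nat) x y)). Qed.

Lemma smooth2_ex_derive2 x y : ex_derive (fun t => F x t) y.
Proof. exact (proj2 (proj1 (F_smooth 1%nat) x y)). Qed.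

End Smooth2.

Lemma smooth2_ex_diff_n n F x y : smooth2 F -> ex_diff_n F n x y.
Proof.
  revert F x y; induction n as [|n IH]; intros F x y HF; simpl.
  - split; [exact (smooth2_continuity F HF x y)|exact Logic.I].
  - repeat split; auto using smooth2_continuity, smooth2_ex_derive1, smooth2_ex_derive2.
    + apply (IH (partial1 F)), smooth2_partial1, HF.
    + apply (IH (partial2 F)), smooth2_partial2, HF.
Qed.

(* By second-order Taylor-Lagrange the linearization error is [O(dist^2)]. *)
Lemma smooth2_differentiable F x y :
  smooth2 F -> differentiable_pt_lim F x y (partial1 F x y) (partial2 F x y).
Proof.
  intros HF.
  assert (HL : locally_2d (fun u v => ex_diff_n F 2 u v) x y).
  { exists (mkposreal 1 Rlt_0_1). intros; apply smooth2_ex_diff_n, HF. }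
  destruct (Taylor_Lagrange_2d F 1 x y HL) as [D [d HD]].
  intros eps. set (D' := Rabs D + 1).
  assert (HD' : 0 < D') by (unfold D'; pose proof (Rabs_pos D); lra).
  assert (Hpos : 0 < Rmin d (eps / D'))
    by (apply Rmin_pos; [apply cond_pos|apply Rdiv_lt_0_compat; [apply cond_pos|lra]]).
  exists (mkposreal _ Hpos). simpl. intros u v Hu Hv.
  pose proof (Rmin_l d (eps / D')). pose proof (Rmin_r d (eps / D')).
  specialize (HD u v ltac:(lra) ltac:(lra)).
  set (m := Rmax (Rabs (u - x)) (Rabs (v - y))) in *.
  assert (Hm0 : 0 <= m) by (unfold m; eapply Rle_trans; [apply Rabs_pos|apply Rmax_l]).
  assert (Hm : m * D' <= eps).
  { assert (Hlt : m < eps / D') by (unfold m; apply Rmax_lub_lt; lra).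
    apply (Rmult_lt_compat_r D') in Hlt; [|lra]. unfold Rdiv in Hlt.
    rewrite Rmult_assoc, Rinv_l in Hlt by lra. lra. }
  replace (F u v - F x y - (partial1 F x y * (u - x) + partial2 F x y * (v - y)))
    with (F u v - DL_pol 1 F x y (u - x) (v - y))
    by (unfold DL_pol, differential, partial_derive, partial1, partial2, Binomial.C; simpl; field).
  eapply Rle_trans; [exact HD|]. simpl.
  pose proof (RRle_abs D). unfold D' in Hm. nra.
Qed.

Lemma continuous_comp_2d F (u v : R -> R) x :
  continuity_2d_pt F (u x) (v x) -> continuous u x -> continuous v x ->
  continuous (fun t => F (u t) (v t)) x.
Proof.
  intros HF Hu Hv. apply continuity_pt_filterlim, continuity_pt_locally. intros eps.
  destruct (HF eps) as [d Hd].
  pose proof (proj1 (continuity_pt_locally u x) (proj2 (continuity_pt_filterlim u x) Hu) d) as Eu.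
  pose proof (proj1 (continuity_pt_locally v x) (proj2 (continuity_pt_filterlim v x) Hv) d) as Ev.
  generalize (filter_and _ _ Eu Ev). apply filter_imp. intros t [H1 H2]. auto.
Qed.

Lemma is_derive_comp_smooth2 F u v x :
  smooth2 F -> ex_derive u x -> ex_derive v x ->
  is_derive (fun t => F (u t) (v t)) x
    (partial1 F (u x) (v x) * Derive u x + partial2 F (u x) (v x) * Derive v x).
Proof.
  intros HF Hu Hv. apply is_derive_Reals, derivable_pt_lim_comp_2d.
  - apply smooth2_differentiable, HF.
  - apply is_derive_Reals, Derive_correct, Hu.
  - apply is_derive_Reals, Derive_correct, Hv.
Qed.

Lemma Cn_comp_smooth2 n I F u v :
  open I -> smooth2 F -> Cn n I u -> Cn n I v -> Cn n I (fun x => F (u x) (v x)).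
Proof.
  intros I_open. revert F u v; induction n as [|n IH]; intros F u v HF Hu Hv.
  - split; [|apply bounded_on_empty]. intros x Hx. apply continuous_comp_2d.
    + apply smooth2_continuity, HF.
    + exact (Cn_bdd_continuous _ _ _ _ _ Hu Hx).
    + exact (Cn_bdd_continuous _ _ _ _ _ Hv Hx).
  - pose proof (Cn_bdd_pred _ _ _ _ Hu) as Hu'. pose proof (Cn_bdd_pred _ _ _ _ Hv) as Hv'.
    destruct Hu as [Du [_ Cu]], Hv as [Dv [_ Cv]].
    split; [intros x Hx; eexists; apply is_derive_comp_smooth2; auto|split; [apply bounded_on_empty|]].
    apply (Cn_bdd_ext I _ I_open n
      (fun x => partial1 F (u x) (v x) * Derive u x + partial2 F (u x) (v x) * Derive v x)).
    + intros x Hx. symmetry. apply is_derive_unique, is_derive_comp_smooth2; auto.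
    + apply Cn_bdd_plus; auto; apply Cn_bdd_mult; auto; apply IH; auto.
      * apply smooth2_partial1, HF.
      * apply smooth2_partial2, HF.
Qed.

Lemma continuous_Rabs_iff (h : R -> R) (x : R) : continuous h x <->
  forall eps, 0 < eps -> exists d, 0 < d /\ forall y, Rabs (y - x) < d -> Rabs (h y - h x) < eps.
Proof.
  split.
  - intros H eps Heps.
    pose proof (proj1 (continuity_pt_locally h x) (proj2 (continuity_pt_filterlim h x) H)) as Hl.
    destruct (Hl (mkposreal _ Heps)) as [d Hd]. exists d. split; [apply cond_pos|exact Hd].
  - intros H. apply continuity_pt_filterlim, continuity_pt_locally. intros eps.
    destruct (H eps (cond_pos eps)) as [d [Hd Hd']]. exists (mkposreal _ Hd). exact Hd'.
Qed.

Lemma continuity_2d_pt_Rabs F x y eps : continuity_2d_pt F x y -> 0 < eps ->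
  exists d, 0 < d /\ forall u v, Rabs (u - x) < d -> Rabs (v - y) < d -> Rabs (F u v - F x y) < eps.
Proof.
  intros HF Heps. destruct (HF (mkposreal _ Heps)) as [d Hd].
  exists d. split; [apply cond_pos|exact Hd].
Qed.

Lemma open_Rabs_lt r : open (fun x => Rabs x < r).
Proof.
  apply (open_ext (fun x => - r < x /\ x < r)).
  - intros x. symmetry. apply Rabs_lt_between.
  - apply open_and; [apply open_gt|apply open_lt].
Qed.

Lemma MVT_Derive (h : R -> R) (a b : R) : (forall x, ex_derive h x) ->
  exists c, Rmin a b <= c <= Rmax a b /\ h b - h a = Derive h c * (b - a).
Proof.
  intros Hh. apply (MVT_gen h a b (Derive h)).
  - intros x _. apply Derive_correct, Hh.
  - intros x _. apply continuity_pt_filterlim. exact (ex_derive_continuous h x (Hh x)).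
Qed.

Lemma Rabs_between_sub a b c : Rmin a b <= c <= Rmax a b -> Rabs (c - a) <= Rabs (b - a).
Proof. unfold Rmin, Rmax; destruct (Rle_dec a b); intros; split_Rabs; lra. Qed.

Lemma Rabs_between_lt a b c d : Rmin a b <= c <= Rmax a b -> Rabs a < d -> Rabs b < d -> Rabs c < d.
Proof. unfold Rmin, Rmax; destruct (Rle_dec a b); intros; split_Rabs; lra. Qed.

Lemma Rabs_div_sub_le A B a b t : / 2 < B -> / 2 < b -> Rabs (A - a) <= t -> Rabs (B - b) <= t ->
  Rabs (A / B - a / b) <= 4 * t * (Rabs a + Rabs b).
Proof.
  intros HB Hb HA HB'.
  replace (A / B - a / b) with (((A - a) * b + a * (b - B)) * / (B * b)) by (field; lra).
  assert (Hinv : 0 < / (B * b) <= 4).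
  { split; [apply Rinv_0_lt_compat; nra|]. rewrite <- (Rinv_inv 4). apply Rinv_le_contravar; nra. }
  assert (Hnum : Rabs ((A - a) * b + a * (b - B)) <= t * (Rabs a + Rabs b)).
  { eapply Rle_trans; [apply Rabs_triang|]. rewrite !Rabs_mult, (Rabs_minus_sym b B).
    pose proof (Rmult_le_compat_r (Rabs b) _ _ (Rabs_pos b) HA).
    pose proof (Rmult_le_compat_l (Rabs a) _ _ (Rabs_pos a) HB'). lra. }
  rewrite Rabs_mult, (Rabs_pos_eq (/ (B * b))) by lra.
  pose proof (Rabs_pos ((A - a) * b + a * (b - B))). nra.
Qed.

Section ImplicitFunction.

Variable f : R -> R -> R.
Hypothesis f_smooth : smooth2 f.
Variable rho : R.
Hypothesis partial2_gt_half :
  forall u v, Rabs u < rho -> Rabs v < rho -> / 2 < partial2 f u v.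

Lemma f_increasing2 u v1 v2 :
  Rabs u < rho -> Rabs v1 < rho -> Rabs v2 < rho -> v1 < v2 -> f u v1 < f u v2.
Proof.
  intros Hu H1 H2 H12.
  destruct (MVT_Derive (fun v => f u v) v1 v2) as [c [Hc E]]; [apply smooth2_ex_derive2, f_smooth|].
  pose proof (partial2_gt_half u c Hu (Rabs_between_lt _ _ _ _ Hc H1 H2)).
  unfold partial2 in *. nra.
Qed.

Lemma f_nondecreasing2 u v1 v2 :
  Rabs u < rho -> Rabs v1 < rho -> Rabs v2 < rho -> v1 <= v2 -> f u v1 <= f u v2.
Proof.
  intros Hu H1 H2 [H12|<-]; [left; apply f_increasing2; auto|lra].
Qed.

Definition implicit_fun (U : R) : R :=
  epsilon (inhabits 0) (fun V => Rabs V < rho /\ f U V = 0).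

Variable r : R.
Hypothesis r_le_rho : r <= rho.
Hypothesis f_sign_change : forall U, Rabs U < r -> f U (- (rho / 2)) < 0 < f U (rho / 2).

Lemma implicit_fun_spec U : Rabs U < r -> Rabs (implicit_fun U) < rho /\ f U (implicit_fun U) = 0.
Proof.
  intros HU. apply (epsilon_spec (inhabits 0) (fun V => Rabs V < rho /\ f U V = 0)).
  pose proof (f_sign_change U HU). pose proof (Rabs_pos U).
  destruct (IVT_gen (fun v => f U v) (- (rho / 2)) (rho / 2) 0) as [V [HV FV]].
  - intros v. apply continuity_pt_filterlim.
    exact (ex_derive_continuous _ v (smooth2_ex_derive2 f f_smooth U v)).
  - rewrite Rmin_left, Rmax_right; lra.
  - rewrite Rmin_left, Rmax_right in HV by lra.
    exists V. split; [apply Rabs_lt_between; lra|exact FV].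
Qed.

Lemma implicit_fun_unique U V :
  Rabs U < r -> Rabs V < rho -> f U V = 0 -> V = implicit_fun U.
Proof.
  intros HU HV FV. destruct (implicit_fun_spec U HU) as [Hg Fg].
  assert (HU' : Rabs U < rho) by lra.
  destruct (Rtotal_order V (implicit_fun U)) as [L|[E|L]]; [|exact E|].
  - pose proof (f_increasing2 U _ _ HU' HV Hg L). lra.
  - pose proof (f_increasing2 U _ _ HU' Hg HV L). lra.
Qed.

Lemma implicit_fun_between U v1 v2 :
  Rabs U < r -> Rabs v1 < rho -> Rabs v2 < rho -> f U v1 < 0 < f U v2 ->
  v1 < implicit_fun U < v2.
Proof.
  intros HU H1 H2 Hf. destruct (implicit_fun_spec U HU) as [Hg Fg].
  assert (HU' : Rabs U < rho) by lra.
  split; apply Rnot_le_lt; intros L.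
  - pose proof (f_nondecreasing2 U _ _ HU' Hg H1 L). lra.
  - pose proof (f_nondecreasing2 U _ _ HU' H2 Hg L). lra.
Qed.

Lemma implicit_fun_continuous U : Rabs U < r -> continuous implicit_fun U.
Proof.
  intros HU. apply continuous_Rabs_iff. intros eps Heps.
  destruct (implicit_fun_spec U HU) as [Hg Fg]. set (g0 := implicit_fun U) in *.
  set (e := Rmin eps (rho - Rabs g0) / 2).
  assert (He : 0 < e) by (unfold e; pose proof (Rmin_pos eps (rho - Rabs g0)); lra).
  assert (He1 : e < eps) by (unfold e; pose proof (Rmin_l eps (rho - Rabs g0)); lra).
  assert (He2 : e <= (rho - Rabs g0) / 2) by (unfold e; pose proof (Rmin_r eps (rho - Rabs g0)); lra).
  assert (Hlo : Rabs (g0 - e) < rho) by (split_Rabs; lra).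
  assert (Hhi : Rabs (g0 + e) < rho) by (split_Rabs; lra).
  assert (HU' : Rabs U < rho) by lra.
  assert (Flo : f U (g0 - e) < 0) by (rewrite <- Fg; apply f_increasing2; auto; lra).
  assert (Fhi : 0 < f U (g0 + e)) by (rewrite <- Fg; apply f_increasing2; auto; lra).
  destruct (proj1 (continuous_Rabs_iff (fun u => f u (g0 - e)) U)
    (ex_derive_continuous _ _ (smooth2_ex_derive1 f f_smooth U _)) (- f U (g0 - e)))
    as [d1 [Hd1 E1]]; [lra|].
  destruct (proj1 (continuous_Rabs_iff (fun u => f u (g0 + e)) U)
    (ex_derive_continuous _ _ (smooth2_ex_derive1 f f_smooth U _)) (f U (g0 + e)))
    as [d2 [Hd2 E2]]; [lra|].
  exists (Rmin (Rmin d1 d2) (r - Rabs U)). split; [repeat apply Rmin_pos; lra|].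
  intros U' HU'd.
  pose proof (Rmin_l (Rmin d1 d2) (r - Rabs U)). pose proof (Rmin_r (Rmin d1 d2) (r - Rabs U)).
  pose proof (Rmin_l d1 d2). pose proof (Rmin_r d1 d2).
  specialize (E1 U' ltac:(lra)). specialize (E2 U' ltac:(lra)). simpl in E1, E2.
  assert (HU'r : Rabs U' < r) by (split_Rabs; lra).
  pose proof (implicit_fun_between U' (g0 - e) (g0 + e) HU'r Hlo Hhi ltac:(split_Rabs; lra)).
  split_Rabs; lra.
Qed.

Lemma implicit_fun_slope U h :
  Rabs U < r -> Rabs (U + h) < r ->
  exists c1 c2, Rabs (c1 - U) <= Rabs h /\
    Rabs (c2 - implicit_fun U) <= Rabs (implicit_fun (U + h) - implicit_fun U) /\
    / 2 < partial2 f U c2 /\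
    partial1 f c1 (implicit_fun (U + h)) * h
    + partial2 f U c2 * (implicit_fun (U + h) - implicit_fun U) = 0.
Proof.
  intros HU HUh.
  destruct (implicit_fun_spec U HU) as [H0 F0], (implicit_fun_spec _ HUh) as [H1 F1].
  set (g0 := implicit_fun U) in *. set (g1 := implicit_fun (U + h)) in *.
  destruct (MVT_Derive (fun u => f u g1) U (U + h)) as [c1 [Hc1 E1]];
    [intros; apply smooth2_ex_derive1, f_smooth|].
  destruct (MVT_Derive (fun v => f U v) g0 g1) as [c2 [Hc2 E2]];
    [intros; apply smooth2_ex_derive2, f_smooth|].
  exists c1, c2. split; [|split; [|split]].
  - pose proof (Rabs_between_sub _ _ _ Hc1) as Hh. replace (U + h - U) with h in Hh by ring. exact Hh.
  - exact (Rabs_between_sub _ _ _ Hc2).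
  - apply partial2_gt_half; [lra|exact (Rabs_between_lt _ _ _ _ Hc2 H0 H1)].
  - unfold partial1, partial2. replace (U + h - U) with h in E1 by ring. lra.
Qed.

Lemma implicit_fun_derive U : Rabs U < r ->
  is_derive implicit_fun U (- partial1 f U (implicit_fun U) / partial2 f U (implicit_fun U)).
Proof.
  intros HU. apply is_derive_Reals. intros eps Heps.
  destruct (implicit_fun_spec U HU) as [H0 _]. set (g0 := implicit_fun U) in *.
  set (a := partial1 f U g0). set (b := partial2 f U g0).
  assert (Hb : / 2 < b) by (apply partial2_gt_half; lra).
  set (t := eps / (8 * (Rabs a + Rabs b) + 1)).
  assert (Hab : 0 <= Rabs a + Rabs b) by (pose proof (Rabs_pos a); pose proof (Rabs_pos b); lra).
  assert (Ht : 0 < t) by (unfold t; apply Rdiv_lt_0_compat; lra).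
  assert (Hteps : 4 * t * (Rabs a + Rabs b) < eps).
  { unfold t. apply (Rmult_lt_reg_r (8 * (Rabs a + Rabs b) + 1)); [lra|].
    field_simplify; [nra|lra]. }
  destruct (continuity_2d_pt_Rabs (partial1 f) U g0 t) as [e1 [He1 E1]]; auto.
  { apply smooth2_continuity, smooth2_partial1, f_smooth. }
  destruct (continuity_2d_pt_Rabs (partial2 f) U g0 t) as [e2 [He2 E2]]; auto.
  { apply smooth2_continuity, smooth2_partial2, f_smooth. }
  destruct (proj1 (continuous_Rabs_iff implicit_fun U) (implicit_fun_continuous U HU) (Rmin e1 e2))
    as [e3 [He3 E3]]; [apply Rmin_pos; auto|].
  assert (Hd : 0 < Rmin (Rmin e1 e3) (r - Rabs U)) by (repeat apply Rmin_pos; lra).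
  exists (mkposreal _ Hd). simpl. intros h Hh0 Hh.
  pose proof (Rmin_l (Rmin e1 e3) (r - Rabs U)). pose proof (Rmin_r (Rmin e1 e3) (r - Rabs U)).
  pose proof (Rmin_l e1 e3). pose proof (Rmin_r e1 e3).
  pose proof (Rmin_l e1 e2). pose proof (Rmin_r e1 e2).
  assert (HUh : Rabs (U + h) < r) by (split_Rabs; lra).
  destruct (implicit_fun_slope U h HU HUh) as [c1 [c2 [Hc1 [Hc2 [HB Eq]]]]]. fold g0 in Hc2, Eq.
  set (g1 := implicit_fun (U + h)) in *.
  assert (Hg : Rabs (g1 - g0) < Rmin e1 e2) by (apply E3; replace (U + h - U) with h by ring; lra).
  set (A := partial1 f c1 g1) in *. set (B := partial2 f U c2) in *.
  assert (HA : Rabs (A - a) <= t) by (left; apply E1; lra).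
  assert (HB' : Rabs (B - b) <= t) by (left; apply E2; [rewrite Rminus_diag, Rabs_R0|]; lra).
  assert (Hq : (g1 - g0) / h = - A / B) by (field_simplify_eq; lra).
  rewrite Hq. replace (- A / B - - a / b) with (- (A / B - a / b)) by (field; lra).
  rewrite Rabs_Ropp. eapply Rle_lt_trans; [apply Rabs_div_sub_le; eauto|exact Hteps].
Qed.

Lemma Cn_implicit_fun n : Cn n (fun U => Rabs U < r) implicit_fun.
Proof.
  pose proof (open_Rabs_lt r) as I_open.
  induction n as [|n IH].
  - split; [exact implicit_fun_continuous|apply bounded_on_empty].
  - split; [intros U HU; eexists; apply implicit_fun_derive, HU|split; [apply bounded_on_empty|]].
    apply (Cn_bdd_ext _ _ I_open n
      (fun U => (-1 * partial1 f U (implicit_fun U)) * / partial2 f U (implicit_fun U))).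
    + intros U HU. rewrite (is_derive_unique _ _ _ (implicit_fun_derive U HU)). unfold Rdiv. ring.
    + assert (HC : forall F, smooth2 F -> Cn n (fun U => Rabs U < r) (fun U => F U (implicit_fun U))).
      { intros F HF. apply Cn_comp_smooth2; auto using Cn_id. }
      apply Cn_bdd_mult; auto.
      * apply Cn_bdd_scal; auto. apply HC, smooth2_partial1, f_smooth.
      * apply Cn_inv; auto. apply HC, smooth2_partial2, f_smooth.
        intros U HU. pose proof (partial2_gt_half U (implicit_fun U) ltac:(lra)
          (proj1 (implicit_fun_spec U HU))). lra.
Qed.

End ImplicitFunction.

Theorem implicit_function f :
  smooth2 f -> f 0 0 = 0 -> partial2 f 0 0 = 1 ->
  exists r rho, 0 < r /\ exists g : R -> R,
    (forall U, Rabs U < r -> Rabs (g U) < rho /\ f U (g U) = 0) /\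
    (forall U V, Rabs U < r -> Rabs V < rho -> f U V = 0 -> V = g U) /\
    (forall n, Cn n (fun U => Rabs U < r) g).
Proof.
  intros Hf Hf0 Hd.
  destruct (continuity_2d_pt_Rabs (partial2 f) 0 0 (/ 2)) as [rho [Hrho Erho]];
    [apply smooth2_continuity, smooth2_partial2, Hf|lra|].
  assert (Hgt : forall u v, Rabs u < rho -> Rabs v < rho -> / 2 < partial2 f u v).
  { intros u v Hu Hv. specialize (Erho u v). rewrite !Rminus_0_r, Hd in Erho.
    specialize (Erho Hu Hv). split_Rabs; lra. }
  assert (Hrho2 : Rabs (rho / 2) < rho /\ Rabs (- (rho / 2)) < rho /\ Rabs 0 < rho)
    by (rewrite Rabs_Ropp, Rabs_R0, Rabs_pos_eq; lra).
  assert (Fhi : f 0 0 < f 0 (rho / 2)) by (apply (f_increasing2 f Hf rho Hgt); lra).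
  assert (Flo : f 0 (- (rho / 2)) < f 0 0) by (apply (f_increasing2 f Hf rho Hgt); lra).
  rewrite Hf0 in Fhi, Flo.
  destruct (proj1 (continuous_Rabs_iff (fun u => f u (rho / 2)) 0)
    (ex_derive_continuous _ _ (smooth2_ex_derive1 f Hf 0 _)) _ Fhi) as [d1 [Hd1 E1]].
  destruct (proj1 (continuous_Rabs_iff (fun u => f u (- (rho / 2))) 0)
    (ex_derive_continuous _ _ (smooth2_ex_derive1 f Hf 0 _)) (- f 0 (- (rho / 2)))) as [d2 [Hd2 E2]];
    [lra|].
  set (r := Rmin (Rmin d1 d2) rho).
  pose proof (Rmin_l (Rmin d1 d2) rho). pose proof (Rmin_r (Rmin d1 d2) rho).
  pose proof (Rmin_l d1 d2). pose proof (Rmin_r d1 d2).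
  assert (Hsign : forall U, Rabs U < r -> f U (- (rho / 2)) < 0 < f U (rho / 2)).
  { intros U HU. specialize (E1 U). specialize (E2 U). rewrite Rminus_0_r in E1, E2.
    specialize (E1 ltac:(unfold r in *; lra)). specialize (E2 ltac:(unfold r in *; lra)).
    simpl in E1, E2. split_Rabs; lra. }
  assert (Hr : r <= rho) by (unfold r; lra).
  exists r, rho. split; [unfold r; repeat apply Rmin_pos; lra|].
  exists (implicit_fun f rho). split; [|split].
  - intros U HU. eapply implicit_fun_spec; eauto.
  - intros U V HU HV FV. eapply implicit_fun_unique; eauto.
  - intros n. eapply Cn_implicit_fun; eauto.
Qed.

Lemma Rabs_scale_lt t x r : 0 <= t <= 1 -> Rabs x < r -> Rabs (t * x) < r.
Proof.
  intros Ht Hx. rewrite Rabs_mult, (Rabs_pos_eq t) by lra. pose proof (Rabs_pos x). nra.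
Qed.

Lemma locally_2d_Rabs_mult_lt u0 v0 r :
  Rabs (v0 * u0) < r -> locally_2d (fun u v => Rabs (v * u) < r) u0 v0.
Proof.
  intros H0.
  assert (Hc : continuity_2d_pt (fun u v => v * u) u0 v0)
    by (apply continuity_2d_pt_mult; [apply continuity_2d_pt_id2|apply continuity_2d_pt_id1]).
  destruct (Hc (mkposreal (r - Rabs (v0 * u0)) ltac:(simpl; lra))) as [d Hd].
  exists d. intros u v Hu Hv. specialize (Hd u v Hu Hv). simpl in Hd. split_Rabs; lra.
Qed.

Lemma is_derive_scaled (h : R -> R) c t x :
  ex_derive h (t * x) -> is_derive (fun u => c * h (t * u)) x (c * (t * Derive h (t * x))).
Proof. intros Hh. auto_derive; [exact Hh|]. rewrite Rmult_1_r. reflexivity. Qed.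

Lemma is_derive_RInt_scaled (h : R -> R) r n U :
  (forall x, Rabs x < r -> ex_derive h x) ->
  (forall x, Rabs x < r -> continuous (Derive h) x) -> Rabs U < r ->
  is_derive (fun u => RInt (fun t => t ^ n * h (t * u)) 0 1) U
    (RInt (fun t => t ^ S n * Derive h (t * U)) 0 1).
Proof.
  intros Hd Hc HU.
  assert (Hin : forall t x, 0 <= t <= 1 -> Rabs x < r -> Rabs (t * x) < r) by auto using Rabs_scale_lt.
  replace (RInt (fun t => t ^ S n * Derive h (t * U)) 0 1)
    with (RInt (fun t => Derive (fun u => t ^ n * h (t * u)) U) 0 1).
  2:{ apply RInt_ext. rewrite Rmin_left, Rmax_right by lra. intros t Ht. apply is_derive_unique.
      replace (t ^ S n * Derive h (t * U)) with (t ^ n * (t * Derive h (t * U))) by (simpl; ring).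
      apply is_derive_scaled, Hd, Hin; auto; lra. }
  apply (is_derive_RInt_param (fun u t => t ^ n * h (t * u))).
  - apply (locally_open _ _ (open_Rabs_lt r)); [|exact HU].
    intros x Hx t Ht. rewrite Rmin_left, Rmax_right in Ht by lra.
    eexists. apply is_derive_scaled, Hd, Hin; auto.
  - intros t Ht. rewrite Rmin_left, Rmax_right in Ht by lra.
    apply (continuity_2d_pt_ext_loc (fun u v => v ^ n * (v * Derive h (v * u)))).
    + destruct (locally_2d_Rabs_mult_lt U t r (Hin t U Ht HU)) as [d Hloc].
      exists d. intros u v Hu Hv. symmetry.
      apply is_derive_unique, is_derive_scaled, Hd, Hloc; auto.
    + apply continuity_2d_pt_mult; [|apply continuity_2d_pt_mult; [apply continuity_2d_pt_id2|]].
      * apply (continuity_1d_2d_pt_comp (fun x => x ^ n) (fun u v => v));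
          [apply derivable_continuous_pt, derivable_pt_pow|apply continuity_2d_pt_id2].
      * apply (continuity_1d_2d_pt_comp (Derive h) (fun u v => v * u)).
        -- apply continuity_pt_filterlim, Hc, Hin; auto.
        -- apply continuity_2d_pt_mult; [apply continuity_2d_pt_id2|apply continuity_2d_pt_id1].
  - apply (locally_open _ _ (open_Rabs_lt r)); [|exact HU]. intros x Hx.
    apply (ex_RInt_continuous (V := R_CompleteNormedModule)).
    rewrite Rmin_left, Rmax_right by lra. intros t Ht.
    apply (continuous_mult (fun t => t ^ n) (fun t => h (t * x))).
    + apply continuity_pt_filterlim, derivable_continuous_pt, derivable_pt_pow.
    + apply (continuous_comp (fun t => t * x) h).
      * apply (continuous_mult (fun t => t) (fun _ => x)); [apply continuous_id|apply continuous_const].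
      * exact (ex_derive_continuous h _ (Hd _ (Hin t x Ht Hx))).
Qed.

Section Hadamard.

Variables (g : R -> R) (r : R).
Hypothesis g_Cn : forall n, Cn n (fun x => Rabs x < r) g.

Lemma ex_derive_Derive_n j x : Rabs x < r -> ex_derive (Derive_n g j) x.
Proof.
  intros Hx. destruct (proj1 (Cn_bdd_iff (S j) _ _ g) (g_Cn (S j))) as [Hd _]. auto.
Qed.

Lemma continuous_Derive_n_scaled j U t :
  Rabs (t * U) < r -> continuous (fun s => Derive_n g j (s * U)) t.
Proof.
  intros Ht. apply (continuous_comp (fun s => s * U) (Derive_n g j)).
  - apply (continuous_mult (fun s => s) (fun _ => U)); [apply continuous_id|apply continuous_const].
  - exact (ex_derive_continuous _ _ (ex_derive_Derive_n j _ Ht)).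
Qed.

Definition hadamard (n : nat) (U : R) : R :=
  RInt (fun t => t ^ n * Derive_n g (S n) (t * U)) 0 1.

Lemma is_derive_hadamard n U : Rabs U < r -> is_derive (hadamard n) U (hadamard (S n) U).
Proof.
  intros HU. apply (is_derive_RInt_scaled (Derive_n g (S n)) r n U); auto using ex_derive_Derive_n.
  intros x Hx. exact (ex_derive_continuous _ _ (ex_derive_Derive_n (S (S n)) x Hx)).
Qed.

Lemma Cn_hadamard k n : Cn k (fun U => Rabs U < r) (hadamard n).
Proof.
  revert n; induction k as [|k IH]; intros n.
  - split; [|apply bounded_on_empty]. intros U HU.
    exact (ex_derive_continuous _ _ (ex_intro _ _ (is_derive_hadamard n U HU))).
  - split; [intros U HU; eexists; apply is_derive_hadamard, HU|split; [apply bounded_on_empty|]].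
    apply (Cn_bdd_ext _ _ (open_Rabs_lt r) k (hadamard (S n))); [|apply IH].
    intros U HU. symmetry. apply is_derive_unique, is_derive_hadamard, HU.
Qed.

Lemma hadamard_0_mul U : Rabs U < r -> U * hadamard 0 U = g U - g 0.
Proof.
  intros HU.
  assert (Hg : is_RInt (fun t => U * Derive g (t * U)) 0 1 (minus (g (1 * U)) (g (0 * U)))).
  { apply (is_RInt_derive (V := R_CompleteNormedModule) (fun t => g (t * U)));
      rewrite Rmin_left, Rmax_right by lra; intros t Ht.
    - auto_derive; [apply (ex_derive_Derive_n 0), Rabs_scale_lt; auto|rewrite Rmult_1_l; reflexivity].
    - apply (continuous_mult (K := R_AbsRing) (fun _ => U) (fun t => Derive g (t * U))).
      + apply continuous_const.
      + apply (continuous_Derive_n_scaled 1), Rabs_scale_lt; auto. }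
  rewrite Rmult_1_l, Rmult_0_l in Hg. unfold hadamard. simpl.
  change (g U - g 0) with (minus (g U) (g 0)). rewrite <- (is_RInt_unique _ _ _ _ Hg).
  rewrite <- (RInt_scal (V := R_CompleteNormedModule)).
  - apply RInt_ext. intros t _. unfold scal; simpl; unfold mult; simpl. rewrite Rmult_1_l. reflexivity.
  - apply (ex_RInt_continuous (V := R_CompleteNormedModule)).
    rewrite Rmin_left, Rmax_right by lra. intros t Ht.
    apply (continuous_mult (K := R_AbsRing) (fun _ => 1) (fun t => Derive g (t * U))).
    + apply continuous_const.
    + apply (continuous_Derive_n_scaled 1), Rabs_scale_lt; auto.
Qed.

Lemma hadamard_0_linear c U :
  Rabs U < r -> (forall V, Rabs V < r -> g V = c * V) -> hadamard 0 U = c.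
Proof.
  intros HU Hlin. unfold hadamard. rewrite (RInt_ext _ (fun _ => c)).
  - rewrite RInt_const. unfold scal; simpl; unfold mult; simpl. ring.
  - rewrite Rmin_left, Rmax_right by lra. intros t Ht. simpl. rewrite Rmult_1_l.
    rewrite (Derive_ext_loc _ (fun x => c * x)).
    + apply is_derive_unique. auto_derive; [exact Logic.I|ring].
    + apply (locally_open _ _ (open_Rabs_lt r) Hlin), Rabs_scale_lt; auto; lra.
Qed.

End Hadamard.

Lemma continuous_punctured_eq (p q : R -> R) x e :
  0 < e -> continuous p x -> continuous q x ->
  (forall y, 0 < Rabs (y - x) < e -> p y = q y) -> p x = q x.
Proof.
  intros He Hp Hq Hpq.
  pose proof (is_lim_continuity p x (proj2 (continuity_pt_filterlim p x) Hp)) as Lp.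
  pose proof (is_lim_continuity q x (proj2 (continuity_pt_filterlim q x) Hq)) as Lq.
  apply (is_lim_ext_loc p q) in Lp.
  - apply is_lim_unique in Lp, Lq. rewrite Lq in Lp. injection Lp. auto.
  - exists (mkposreal e He). intros y Hy Hyx. apply Hpq. split; [|exact Hy].
    apply Rabs_pos_lt. lra.
Qed.

Definition uv_coord (c : R) (h : R -> R) (s : R) : R := -4 * c ^ 2 * s * h s.

Lemma H_gamma a b f sigma phi psi s :
  H a b f (gamma a b sigma phi psi s)
  = / 2 * f (uv_coord a phi s) (uv_coord b (fun s => sigma * psi s) s).
Proof. unfold H, gamma, uv_coord, add4, scal4, v1, v2, v3, v4. simpl. f_equal. f_equal; ring. Qed.

Lemma uv_coord_0 c h : uv_coord c h 0 = 0.
Proof. unfold uv_coord. ring. Qed.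

Lemma uv_coord_near_0 c h e : continuous h 0 -> 0 < e ->
  exists d, 0 < d /\ forall s, Rabs s < d -> Rabs (uv_coord c h s) < e.
Proof.
  intros Hh He.
  assert (Hc : continuous (uv_coord c h) 0).
  { apply (continuous_mult (fun s => -4 * c ^ 2 * s) h); [|exact Hh].
    apply (continuous_mult (fun _ => -4 * c ^ 2) (fun s => s));
      [apply continuous_const|apply continuous_id]. }
  destruct (proj1 (continuous_Rabs_iff _ 0) Hc e He) as [d [Hd Hsmall]].
  exists d. split; [exact Hd|]. intros s Hs.
  specialize (Hsmall s). rewrite uv_coord_0, !Rminus_0_r in Hsmall. auto.
Qed.

Lemma uv_coord_cancel c h1 h2 s :
  c <> 0 -> s <> 0 -> uv_coord c h1 s = uv_coord c h2 s -> h1 s = h2 s.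
Proof.
  unfold uv_coord. intros Hc Hs E. apply (Rmult_eq_reg_l (-4 * c ^ 2 * s)); [lra|].
  repeat apply Rmult_integral_contrapositive_currified; auto using pow_nonzero; lra.
Qed.

Lemma Cn_uv_coord c h n I : open I -> Cn n I h -> Cn n I (uv_coord c h).
Proof.
  intros HI Hh. unfold uv_coord.
  apply Cn_bdd_mult; auto. apply Cn_bdd_scal; auto. apply Cn_id; auto.
Qed.

Definition curve_psi (a b sigma : R) (g phi : R -> R) (s : R) : R :=
  a ^ 2 / (b ^ 2 * sigma) * phi s * hadamard g 0 (uv_coord a phi s).

Section Curve.

Variables (a b sigma r rho d : R) (f : R -> R -> R) (g phi : R -> R) (k : nat).
Hypothesis b_pos : 0 < b.
Hypothesis sigma_pm : sigma = 1 \/ sigma = -1.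
Hypothesis f_0 : f 0 0 = 0.
Hypothesis g_root : forall U, Rabs U < r -> Rabs (g U) < rho /\ f U (g U) = 0.
Hypothesis g_unique : forall U V, Rabs U < r -> Rabs V < rho -> f U V = 0 -> V = g U.
Hypothesis g_Cn : forall n, Cn n (fun U => Rabs U < r) g.
Hypothesis phi_Cn : Cn k (fun _ => True) phi.
Hypothesis d_pos : 0 < d.
Hypothesis d_small : forall s, Rabs s < d -> Rabs (uv_coord a phi s) < r.

Local Notation psi := (curve_psi a b sigma g phi).

Let r_pos : 0 < r.
Proof. specialize (d_small 0). rewrite uv_coord_0, !Rabs_R0 in d_small. auto. Qed.

Let rho_pos : 0 < rho.
Proof.
  pose proof (proj1 (g_root 0 ltac:(rewrite Rabs_R0; exact r_pos))). pose proof (Rabs_pos (g 0)). lra.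
Qed.

Lemma g_0 : g 0 = 0.
Proof. symmetry. apply g_unique; rewrite ?Rabs_R0; auto. Qed.

Lemma uv_coord_curve_psi s :
  Rabs s < d -> uv_coord b (fun s => sigma * psi s) s = g (uv_coord a phi s).
Proof.
  intros Hs. rewrite <- (Rminus_0_r (g _)), <- g_0, <- (hadamard_0_mul g r g_Cn) by auto.
  unfold curve_psi, uv_coord. field. destruct sigma_pm; lra.
Qed.

Lemma curve_psi_solves s : Rabs s < d -> H a b f (gamma a b sigma phi psi s) = 0.
Proof.
  intros Hs. rewrite H_gamma, uv_coord_curve_psi, (proj2 (g_root _ (d_small s Hs))); auto. ring.
Qed.

Let phi_Cn_d : Cn k (fun s => Rabs s < d) phi.
Proof. apply (Cn_bdd_sub k (fun _ => True) _ (fun _ => False)); auto. Qed.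

Lemma Cn_hadamard_uv_coord : Cn k (fun s => Rabs s < d) (fun s => hadamard g 0 (uv_coord a phi s)).
Proof.
  apply (Cn_comp _ (open_Rabs_lt d) k (fun U => Rabs U < r)); auto using Cn_hadamard.
  apply Cn_uv_coord; [apply open_Rabs_lt|exact phi_Cn_d].
Qed.

Lemma Cn_curve_psi : Cn k (fun s => Rabs s < d) psi.
Proof.
  pose proof (open_Rabs_lt d). unfold curve_psi.
  apply Cn_bdd_mult; [auto| |exact Cn_hadamard_uv_coord].
  apply Cn_bdd_scal; auto.
Qed.

Lemma curve_psi_unique (delta' : R) (psi' : R -> R) :
  0 < delta' -> (forall s, Rabs s < delta' -> continuous psi' s) ->
  (forall s, Rabs s < delta' -> H a b f (gamma a b sigma phi psi' s) = 0) ->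
  exists eps, 0 < eps /\ forall s, Rabs s < eps -> psi' s = psi s.
Proof.
  intros Hd' Hc' Hsol.
  destruct (uv_coord_near_0 b (fun s => sigma * psi' s) rho) as [e [He Hsmall]]; [|exact rho_pos|].
  { apply (continuous_mult (fun _ => sigma) psi'); [apply continuous_const|apply Hc'].
    rewrite Rabs_R0. exact Hd'. }
  set (eps := Rmin (Rmin e delta') d).
  assert (Heps : 0 < eps) by (unfold eps; repeat apply Rmin_pos; lra).
  assert (Hs_eps : forall s, Rabs s < eps -> Rabs s < e /\ Rabs s < delta' /\ Rabs s < d).
  { intros s Hs. pose proof (Rmin_l (Rmin e delta') d). pose proof (Rmin_r (Rmin e delta') d).
    pose proof (Rmin_l e delta'). pose proof (Rmin_r e delta'). unfold eps in Hs. lra. }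
  assert (Hpunct : forall s, 0 < Rabs s < eps -> psi' s = psi s).
  { intros s [Hs0 Hs]. destruct (Hs_eps s Hs) as [Hse [Hsd' Hsd]].
    assert (E : uv_coord b (fun s => sigma * psi' s) s = uv_coord b (fun s => sigma * psi s) s).
    { rewrite uv_coord_curve_psi by exact Hsd. apply g_unique; auto.
      specialize (Hsol s Hsd'). rewrite H_gamma in Hsol. lra. }
    apply uv_coord_cancel in E; [|lra|intros ->; rewrite Rabs_R0 in Hs0; lra].
    apply (Rmult_eq_reg_l sigma); [exact E|destruct sigma_pm; lra]. }
  exists eps. split; [exact Heps|]. intros s Hs.
  (* At [s = 0] every value of [psi'] solves the equation: only continuity pins it down. *)
  destruct (Req_dec s 0) as [->|Hs0]; [|apply Hpunct; split; [apply Rabs_pos_lt|]; auto].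
  apply (continuous_punctured_eq psi' psi 0 eps Heps).
  - apply Hc'. rewrite Rabs_R0. exact Hd'.
  - apply (Cn_bdd_continuous k (fun s => Rabs s < d) (fun _ => False)); [exact Cn_curve_psi|].
    rewrite Rabs_R0. exact d_pos.
  - intros y Hy. rewrite Rminus_0_r in Hy. auto.
Qed.

Lemma curve_psi_vanishes l :
  l <= INR k -> vanishes_to_order k l phi -> vanishes_to_order_near k l (d / 2) psi.
Proof.
  intros Hlk [phib [Hphib [Hphi Hbd]]].
  set (m := fun s => hadamard g 0 (uv_coord a phi s)).
  set (P := fun s => 0 < Rabs s < d / 2).
  assert (P_open : open P).
  { apply open_and; [apply (open_ext (fun s => s <> 0)); [|apply open_neq]|apply open_Rabs_lt].
    intros s. split; [apply Rabs_pos_lt|intros Hs ->; rewrite Rabs_R0 in Hs; lra]. }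
  assert (P_neq0 : forall s, P s -> s <> 0) by (intros s [Hs _] ->; rewrite Rabs_R0 in Hs; lra).
  assert (P_d : forall s, P s -> Rabs s < d) by (intros s [_ Hs]; lra).
  assert (Hphib_Cn : Cn k (fun s => s <> 0) phib) by (apply Cn_of_Ck_on, Hphib).
  exists (fun s => a ^ 2 / (b ^ 2 * sigma) * phib s * m s). split; [|split].
  - apply (Ck_on_of_Cn_bdd _ _ (fun _ => False)). apply Cn_bdd_mult; auto.
    + apply Cn_bdd_scal; auto. apply (Cn_bdd_sub k (fun s => s <> 0) _ (fun _ => False)); auto.
    + apply (Cn_bdd_sub k (fun s => Rabs s < d) _ (fun _ => False)); auto.
      exact Cn_hadamard_uv_coord.
  - intros s Hs. unfold curve_psi. rewrite Hphi by auto. fold (m s). ring.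
  - intros j Hj.
    assert (Hjk : (j <= k)%nat) by (apply INR_le; lra).
    assert (Hphib_j : Cn_bdd j (fun s => s <> 0) (fun s => -1 <= s <= 1) phib).
    { apply Cn_bdd_of_Cn; [exact (Cn_bdd_le _ _ _ _ _ Hjk Hphib_Cn)|].
      intros i Hi. destruct (Hbd i) as [M HM]; [apply le_INR in Hi; lra|].
      exists M. intros s [Hs0 Hs]. auto. }
    assert (Hm_j : Cn_bdd j (fun s => Rabs s < d) (fun s => - (d / 2) <= s <= d / 2) m).
    { apply Cn_bdd_compact; [|exact (Cn_bdd_le _ _ _ _ _ Hjk Cn_hadamard_uv_coord)].
      intros s Hs. apply Rabs_lt_between. lra. }
    assert (Hpsib : Cn_bdd j P (fun s => Rabs s <= 1)
                      (fun s => a ^ 2 / (b ^ 2 * sigma) * phib s * m s)).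
    { apply Cn_bdd_mult; auto.
      - apply Cn_bdd_scal; auto. apply (Cn_bdd_sub j (fun s => s <> 0) _ (fun s => -1 <= s <= 1)); auto.
        intros s _ Hs. apply Rabs_le_between, Hs.
      - apply (Cn_bdd_sub j (fun s => Rabs s < d) _ (fun s => - (d / 2) <= s <= d / 2)); auto.
        intros s [_ Hs] _. apply Rabs_le_between. lra. }
    apply Cn_bdd_iff in Hpsib as [_ [_ Hpsib]].
    destruct (Hpsib j (le_n j)) as [M HM]. exists M. intros s Hs Hs1. apply HM. split; auto.
Qed.

Lemma curve_psi_linear :
  (forall u v, f u v = u + v) ->
  forall s, Rabs s < d -> psi s = - sigma * (a ^ 2 / b ^ 2) * phi s.
Proof.
  intros Hlin s Hs. unfold curve_psi.
  rewrite (hadamard_0_linear g r (-1)); auto.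
  - destruct sigma_pm as [-> | ->]; field; lra.
  - intros V HV. pose proof (proj2 (g_root V HV)) as E. rewrite Hlin in E. lra.
Qed.

End Curve.

Theorem lemma3p5 (a b : R) (f : R -> R -> R) (k : nat) (l sigma : R) (phi : R -> R) :
  0 < a -> 0 < b ->
  smooth2 f -> f 0 0 = 0 ->
  Derive (fun u => f u 0) 0 = 1 -> Derive (fun v => f 0 v) 0 = 1 ->
  (1 <= k)%nat -> l <= INR k ->
  (sigma = 1 \/ sigma = -1) ->
  Ck_on k (fun _ => True) phi -> vanishes_to_order k l phi ->
  exists delta : R, 0 < delta /\
  exists psi : R -> R,
    (forall s, Rabs s < delta -> H a b f (gamma a b sigma phi psi s) = 0) /\
    (forall (delta' : R) (psi' : R -> R), 0 < delta' ->
       (forall s, Rabs s < delta' -> continuous psi' s) ->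
       (forall s, Rabs s < delta' -> H a b f (gamma a b sigma phi psi' s) = 0) ->
       exists eps : R, 0 < eps /\ forall s, Rabs s < eps -> psi' s = psi s) /\
    Ck_on k (fun s => Rabs s < delta) psi /\
    vanishes_to_order_near k l delta psi /\
    ((forall u v, f u v = u + v) ->
       forall s, Rabs s < delta -> psi s = - sigma * (a ^ 2 / b ^ 2) * phi s).
Proof.
  intros _ Hb Hf Hf0 _ Hfv _ Hlk Hsigma Hphi Hvan.
  apply Cn_of_Ck_on in Hphi.
  destruct (implicit_function f Hf Hf0 Hfv) as [r [rho [Hr [g [Hroot [Huniq Hg]]]]]].
  destruct (uv_coord_near_0 a phi r (Cn_bdd_continuous _ _ _ _ _ Hphi Logic.I) Hr)
    as [d [Hd Hsmall]].
  exists (d / 2). split; [lra|]. exists (curve_psi a b sigma g phi).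
  split; [|split; [|split; [|split]]].
  - intros s Hs. eapply curve_psi_solves; eauto. lra.
  - intros delta' psi'. apply (curve_psi_unique a b sigma r rho d f g phi k); auto.
  - apply (Ck_on_of_Cn_bdd _ _ (fun _ => False)).
    apply (Cn_bdd_sub k (fun s => Rabs s < d) _ (fun _ => False)); [intros; lra|auto|].
    eapply Cn_curve_psi; eauto.
  - eapply curve_psi_vanishes; eauto.
  - intros Hlin s Hs. eapply curve_psi_linear; eauto. lra.
Qed.
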